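(* Let $p,q\in\mathbb R^3$ with $|p|\ge\frac32q^0$ and $\omega\in\mathbb S^2$. Then for any multi-index $\beta\in\mathbb N^3\setminus\{0\}$ (derivatives $\partial_\beta$ in $p$) there exists an integer $n=n(\beta)\ge1$ such that $$\frac{|\partial_\beta(v_\phi\chi_{A^c})|}{|v_\phi|}+|\partial_\beta p'|+|\partial_\beta q'|\lesssim\langle q\rangle^n.$$
   Context: $\mathfrak c\ge1$ is the speed of light; $p^0=\sqrt{\mathfrak c^2+|p|^2}$, $q^0=\sqrt{\mathfrak c^2+|q|^2}$, $\langle q\rangle=\sqrt{1+|q|^2}$; $\mathfrak s=2(p^0q^0-p\cdot q+\mathfrak c^2)$, $g=\sqrt{2(p^0q^0-p\cdot q-\mathfrak c^2)}$, $v_\phi=\frac{\mathfrak c}4\frac{g\sqrt{\mathfrak s}}{p^0q^0}$, $\gamma_0=(p^0+q^0)/\sqrt{\mathfrak s}$, and $p'=\frac12(p+q)+\frac12g\big(\omega+(\gamma_0-1)(p+q)\frac{(p+q)\cdot\omega}{|p+q|^2}\big)$, $q'=\frac12(p+q)-\frac12g\big(\omega+(\gamma_0-1)(p+q)\frac{(p+q)\cdot\omega}{|p+q|^2}\big)$. Let $\chi\in C_0^\infty([0,\infty))$ with $0\le\chi\le1$, $\chi(r)=1$ on $[0,1]$, $\chi(r)=0$ for $r>2$, and $\chi_{A^c}(p,q)=\big(1-\chi(\frac{p^0}{\mathfrak c})\big)\big(1-\chi(\frac23\frac{|p|}{q^0})\big)$. Implicit constants are independent of $\mathfrak c$, $p$,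 $q$, $\omega$. *)

From Stdlib Require Import Reals.
From Coquelicot Require Import Coquelicot.
Open Scope R_scope.

Definition vec3 : Type := (R * R * R)%type.
Definition v1 (x : vec3) : R := fst (fst x).
Definition v2 (x : vec3) : R := snd (fst x).
Definition v3 (x : vec3) : R := snd x.
Definition mk3 (a b c : R) : vec3 := (a, b, c).
Definition vadd (x y : vec3) : vec3 := mk3 (v1 x + v1 y) (v2 x + v2 y) (v3 x + v3 y).
Definition vscal (a : R) (x : vec3) : vec3 := mk3 (a * v1 x) (a * v2 x) (a * v3 x).
Definition dot (x y : vec3) : R := v1 x * v1 y + v2 x * v2 y + v3 x * v3 y.
Definition vnorm (x : vec3) : R := sqrt (dot x x).

(* p^0 = sqrt(c^2+|p|^2), <q> = sqrt(1+|q|^2) *)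
Definition en (c : R) (p : vec3) : R := sqrt (c ^ 2 + dot p p).
Definition jap (q : vec3) : R := sqrt (1 + dot q q).

Definition s_inv (c : R) (p q : vec3) : R := 2 * (en c p * en c q - dot p q + c ^ 2).
Definition g_rel (c : R) (p q : vec3) : R := sqrt (2 * (en c p * en c q - dot p q - c ^ 2)).
Definition v_phi (c : R) (p q : vec3) : R :=
  c / 4 * (g_rel c p q * sqrt (s_inv c p q)) / (en c p * en c q).
Definition gamma0 (c : R) (p q : vec3) : R := (en c p + en c q) / sqrt (s_inv c p q).

Definition post_dir (c : R) (p q w : vec3) : vec3 :=
  vadd w (vscal ((gamma0 c p q - 1) * dot (vadd p q) w / (vnorm (vadd p q)) ^ 2) (vadd p q)).
Definition p_post (c : R) (p q w : vec3) : vec3 :=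
  vadd (vscal (1/2) (vadd p q)) (vscal (1/2 * g_rel c p q) (post_dir c p q w)).
Definition q_post (c : R) (p q w : vec3) : vec3 :=
  vadd (vscal (1/2) (vadd p q)) (vscal (- (1/2 * g_rel c p q)) (post_dir c p q w)).

Definition chi_Ac (chi : R -> R) (c : R) (p q : vec3) : R :=
  (1 - chi (en c p / c)) * (1 - chi (2 / 3 * vnorm p / en c q)).

Definition d1 (f : vec3 -> R) (p : vec3) : R := Derive (fun t => f (mk3 t (v2 p) (v3 p))) (v1 p).
Definition d2 (f : vec3 -> R) (p : vec3) : R := Derive (fun t => f (mk3 (v1 p) t (v3 p))) (v2 p).
Definition d3 (f : vec3 -> R) (p : vec3) : R := Derive (fun t => f (mk3 (v1 p) (v2 p) t)) (v3 p).

Definition multi_index : Type := (nat * nat * nat)%type.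
Definition dbeta (b : multi_index) (f : vec3 -> R) : vec3 -> R :=
  Nat.iter (fst (fst b)) d1 (Nat.iter (snd (fst b)) d2 (Nat.iter (snd b) d3 f)).
Definition dbeta_vec (b : multi_index) (F : vec3 -> vec3) (p : vec3) : vec3 :=
  mk3 (dbeta b (fun x => v1 (F x)) p) (dbeta b (fun x => v2 (F x)) p)
      (dbeta b (fun x => v3 (F x)) p).

(* chi in C_0^infty([0,oo)), 0<=chi<=1, chi=1 on [0,1], chi=0 on (2,oo).
   Smoothness is required on all of R (any such chi extends smoothly,
   e.g. by 1 on (-oo,0)); values on negative reals are never used. *)
Definition cutoff (chi : R -> R) : Prop :=
  (forall k x, ex_derive_n chi k x) /\
  (forall r, 0 <= r -> 0 <= chi r <= 1) /\
  (forall r, 0 <= r <= 1 -> chi r = 1) /\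
  (forall r, 2 < r -> chi r = 0).

From Stdlib Require Import Reals Lra Lia Psatz.
From Coquelicot Require Import Coquelicot.
Open Scope R_scope.

(* Each quantity is handled as a symbol: a function F of p, with parameters
   c, q, w, whose derivatives of order j are O(<q>^n c^(d-j) (p^0/c)^(m-j)) on the
   region |p| >= 3/2 q^0.  Symbols form a graded algebra, closed under inverses and
   square roots of quantities bounded below by the inverse weight, and under
   composition with the cutoff, whose derivatives live where p^0/c <~ <q>.
   On the region |p| - |q| >= p^0/6, whence g^2 >~ c^2 p^0/q^0 and |p+q| >= p^0/6.
   So v_phi has order (1,0) with 1/v_phi of order (-1,0), chi_{A^c} has order
   (0,0) and p', q' have order (1,1): after at least one derivative all exponents
   are nonpositive, and c >= 1, p^0/c >= 1 leave a power of <q>. *)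

Lemma dot_self_ge0 x : 0 <= dot x x.
Proof. unfold dot; nra. Qed.

Lemma vnorm_ge0 x : 0 <= vnorm x.
Proof. apply sqrt_pos. Qed.

Lemma vnorm_sq x : vnorm x ^ 2 = dot x x.
Proof. unfold vnorm; rewrite pow2_sqrt; auto using dot_self_ge0. Qed.

Lemma en_sq c p : en c p ^ 2 = c ^ 2 + dot p p.
Proof. unfold en; rewrite pow2_sqrt; auto; pose proof (dot_self_ge0 p); nra. Qed.

Lemma en_pos c p : 1 <= c -> 0 < en c p.
Proof. intro; unfold en; apply sqrt_lt_R0; pose proof (dot_self_ge0 p); nra. Qed.

Lemma en_ge_c c p : 1 <= c -> c <= en c p.
Proof. intro; pose proof (en_sq c p); pose proof (dot_self_ge0 p); pose proof (en_pos c p H); nra. Qed.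

Lemma vnorm_le_en c p : 1 <= c -> vnorm p <= en c p.
Proof.
  intro; pose proof (en_sq c p); pose proof (vnorm_sq p); pose proof (en_pos c p H);
  pose proof (vnorm_ge0 p); nra.
Qed.

Lemma jap_ge1 q : 1 <= jap q.
Proof. unfold jap; rewrite <- sqrt_1 at 1; apply sqrt_le_1_alt; pose proof (dot_self_ge0 q); lra. Qed.

Lemma en_le_jap c q : 1 <= c -> en c q <= c * jap q.
Proof.
  intro Hc; pose proof (en_pos c q Hc); pose proof (jap_ge1 q); pose proof (dot_self_ge0 q).
  assert (jap q ^ 2 = 1 + dot q q) by (unfold jap; rewrite pow2_sqrt; lra).
  assert (en c q ^ 2 <= (c * jap q) ^ 2).
  { rewrite en_sq, Rpow_mult_distr, H2. assert (0 <= (c ^ 2 - 1) * dot q q) by (apply Rmult_le_pos; nra). nra. }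
  assert (0 < c * jap q) by nra. nra.
Qed.

Lemma jap_pow_le q n n' : (n <= n')%nat -> jap q ^ n <= jap q ^ n'.
Proof. intro; apply Rle_pow; auto using jap_ge1. Qed.

Lemma dot_le_vnorm p q : Rabs (dot p q) <= vnorm p * vnorm q.
Proof.
  pose proof (vnorm_sq p); pose proof (vnorm_sq q); pose proof (vnorm_ge0 p); pose proof (vnorm_ge0 q).
  rewrite <- (Rabs_pos_eq (vnorm p * vnorm q)) by nra; apply Rsqr_le_abs_0; unfold Rsqr.
  replace (vnorm p * vnorm q * (vnorm p * vnorm q)) with (vnorm p ^ 2 * vnorm q ^ 2) by ring.
  rewrite H, H0. destruct p as [[a1 a2] a3]; destruct q as [[b1 b2] b3]; unfold dot, v1, v2, v3; simpl.
  pose proof (pow2_ge_0 (a1*b2-a2*b1)); pose proof (pow2_ge_0 (a1*b3-a3*b1));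
  pose proof (pow2_ge_0 (a2*b3-a3*b2)); nra.
Qed.

Lemma vnorm_sub_sq_le p q : (vnorm p - vnorm q) ^ 2 <= dot (vadd p q) (vadd p q).
Proof.
  pose proof (dot_le_vnorm p q); pose proof (Rle_abs (- dot p q)); rewrite Rabs_Ropp in H0.
  replace (dot (vadd p q) (vadd p q)) with (dot p p + 2 * dot p q + dot q q)
    by (unfold dot, vadd, mk3, v1, v2, v3; simpl; ring).
  rewrite <- !vnorm_sq; nra.
Qed.

Lemma vnorm_mk3_le a b c : vnorm (mk3 a b c) <= Rabs a + Rabs b + Rabs c.
Proof.
  pose proof (Rabs_pos a); pose proof (Rabs_pos b); pose proof (Rabs_pos c).
  unfold vnorm; rewrite <- (sqrt_pow2 (Rabs a + Rabs b + Rabs c)) by lra.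
  apply sqrt_le_1_alt; unfold dot, mk3, v1, v2, v3; simpl.
  change (a * a) with (Rsqr a); change (b * b) with (Rsqr b); change (c * c) with (Rsqr c).
  rewrite (Rsqr_abs a), (Rsqr_abs b), (Rsqr_abs c); unfold Rsqr; nra.
Qed.

Definition open_region (c : R) (q p : vec3) : Prop := 1 <= c /\ en c q < vnorm p.
Definition region (c : R) (q w p : vec3) : Prop := 1 <= c /\ 3 / 2 * en c q <= vnorm p /\ vnorm w = 1.

Lemma region_open c q w p : region c q w p -> open_region c q p.
Proof. intros [Hc [Hr _]]; split; auto; pose proof (en_pos c q Hc); lra. Qed.

Definition gsq (c : R) (p q : vec3) : R := 2 * (en c p * en c q - dot p q - c ^ 2).

Lemma s_inv_gsq c p q : s_inv c p q = gsq c p q + 4 * c ^ 2.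
Proof. unfold s_inv, gsq; ring. Qed.

Lemma gsq_lower c p q : 1 <= c ->
  c ^ 2 * (vnorm p - vnorm q) ^ 2 <= 3 / 2 * en c p * en c q * gsq c p q.
Proof.
  intro Hc.
  pose proof (en_pos c p Hc); pose proof (en_pos c q Hc); pose proof (en_ge_c c p Hc); pose proof (en_ge_c c q Hc).
  pose proof (vnorm_le_en c p Hc); pose proof (vnorm_le_en c q Hc).
  pose proof (vnorm_ge0 p); pose proof (vnorm_ge0 q).
  pose proof (Rle_abs (dot p q)); pose proof (dot_le_vnorm p q).
  set (P := en c p) in *; set (Q := en c q) in *; set (a := vnorm p) in *; set (b := vnorm q) in *.
  set (X := P * Q - a * b - c ^ 2); set (Y := P * Q + a * b + c ^ 2).
  (* difference of squares, with P^2 = c^2 + a^2 and Q^2 = c^2 + b^2 *)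
  assert (HXY : X * Y = c ^ 2 * (a - b) ^ 2).
  { unfold X, Y; transitivity (P ^ 2 * Q ^ 2 - (a * b + c ^ 2) ^ 2); [ring|].
    unfold P, Q, a, b; rewrite !en_sq, <- !vnorm_sq; ring. }
  assert (Hab : a * b <= P * Q) by (apply Rmult_le_compat; lra).
  assert (Hcc : c ^ 2 <= P * Q) by (simpl; rewrite Rmult_1_r; apply Rmult_le_compat; lra).
  assert (0 <= a * b) by (apply Rmult_le_pos; lra).
  assert (0 < c ^ 2) by nra.
  assert (HY : 0 < Y <= 3 * (P * Q)) by (unfold Y; lra).
  assert (HX : 0 <= X).
  { apply (Rmult_le_reg_r Y); [lra|]. rewrite HXY, Rmult_0_l. apply Rmult_le_pos; [lra | apply pow2_ge_0]. }
  assert (X * Y <= X * (3 * (P * Q))) by (apply Rmult_le_compat_l; lra).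
  assert (X <= P * Q - dot p q - c ^ 2) by (unfold X; lra).
  assert (X * (3 * (P * Q)) <= (P * Q - dot p q - c ^ 2) * (3 * (P * Q))) by (apply Rmult_le_compat_r; lra).
  unfold gsq; fold P Q. lra.
Qed.

Lemma gsq_pos c q p : open_region c q p -> 0 < gsq c p q.
Proof.
  intros [Hc Hp]. pose proof (gsq_lower c p q Hc).
  pose proof (en_pos c p Hc); pose proof (vnorm_le_en c q Hc).
  assert (0 < c ^ 2 * (vnorm p - vnorm q) ^ 2) by (apply Rmult_lt_0_compat; apply pow_lt; lra).
  assert (0 < en c p * en c q) by (apply Rmult_lt_0_compat; auto using en_pos).
  nra.
Qed.

Lemma dot_self_pos c q p : open_region c q p -> 0 < dot p p.
Proof. intros [Hc Hp]. pose proof (en_pos c q Hc). rewrite <- vnorm_sq. apply pow_lt. lra. Qed.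

Lemma dot_vadd_pos c q p : open_region c q p -> 0 < dot (vadd p q) (vadd p q).
Proof.
  intros [Hc Hp]. pose proof (vnorm_le_en c q Hc).
  eapply Rlt_le_trans; [|apply vnorm_sub_sq_le]. apply pow_lt. lra.
Qed.

Section Region.
Variables (c : R) (p q : vec3).
Hypotheses (Hc : 1 <= c) (Hr : 3 / 2 * en c q <= vnorm p).

Lemma en_le_2_vnorm : en c p <= 2 * vnorm p.
Proof.
  pose proof (en_sq c p); pose proof (vnorm_sq p); pose proof (en_pos c p Hc); pose proof (en_ge_c c q Hc).
  nra.
Qed.

Lemma en_le_6_gap : en c p <= 6 * (vnorm p - vnorm q).
Proof. pose proof en_le_2_vnorm; pose proof (vnorm_le_en c q Hc); lra. Qed.

Lemma gsq_lower_region : c ^ 2 * en c p <= 54 * en c q * gsq c p q.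
Proof.
  pose proof (gsq_lower c p q Hc); pose proof en_le_6_gap; pose proof (en_pos c p Hc).
  assert (en c p ^ 2 <= 36 * (vnorm p - vnorm q) ^ 2) by nra.
  apply (Rmult_le_reg_r (en c p)); [lra|]. nra.
Qed.

Lemma en_sq_le_vadd : en c p ^ 2 <= 36 * dot (vadd p q) (vadd p q).
Proof.
  pose proof (vnorm_sub_sq_le p q); pose proof en_le_6_gap; pose proof (en_pos c p Hc). nra.
Qed.

End Region.

(** * Symbol classes *)

Definition weight (c : R) (p : vec3) (d m : R) : R := Rpower c d * Rpower (en c p / c) m.

Lemma en_div_ge1 c p : 1 <= c -> 1 <= en c p / c.
Proof. intro; pose proof (en_ge_c c p H); apply (Rmult_le_reg_r c); [lra|]; field_simplify; lra. Qed.

Lemma weight_pos c p d m : 0 < weight c p d m.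
Proof. apply Rmult_lt_0_compat; apply exp_pos. Qed.

Lemma weight_le c p d m d' m' : 1 <= c -> d <= d' -> m <= m' -> weight c p d m <= weight c p d' m'.
Proof.
  intros Hc Hd Hm; apply Rmult_le_compat; try (left; apply exp_pos).
  - apply Rle_Rpower; auto.
  - apply Rle_Rpower; auto using en_div_ge1.
Qed.

Lemma weight_add c p d1 m1 d2 m2 :
  weight c p (d1 + d2) (m1 + m2) = weight c p d1 m1 * weight c p d2 m2.
Proof. unfold weight; rewrite !Rpower_plus; ring. Qed.

Lemma weight_IZR c p (a b : Z) : 1 <= c ->
  weight c p (IZR a) (IZR b) = powerRZ c a * powerRZ (en c p / c) b.
Proof.
  intro; pose proof (en_div_ge1 c p H); unfold weight.
  rewrite !powerRZ_Rpower; auto; lra.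
Qed.

Ltac weight_eq :=
  match goal with
  | |- context [weight ?c ?p _ _] =>
      pose proof (en_pos c p ltac:(assumption));
      rewrite weight_IZR by assumption; simpl; field; lra
  end.

Lemma weight_sqrt c p d m : sqrt (weight c p d m) = weight c p (d / 2) (m / 2).
Proof.
  unfold weight; pose proof (exp_pos (d * ln c)); pose proof (exp_pos (m * ln (en c p / c))).
  rewrite sqrt_mult by (unfold Rpower; lra).
  rewrite <- !Rpower_sqrt by (unfold Rpower; lra).
  rewrite !Rpower_mult; unfold Rdiv; rewrite !(Rmult_comm _ (/ 2)); reflexivity.
Qed.

Definition family : Type := R -> vec3 -> vec3 -> vec3 -> R.

Definition bounded (F : family) (d m : R) : Prop :=
  exists C n, 0 <= C /\
  forall c q w p, region c q w p -> Rabs (F c q w p) <= C * jap q ^ n * weight c p d m.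

Definition line (i : nat) (p : vec3) (t : R) : vec3 :=
  match i with
  | 0%nat => mk3 t (v2 p) (v3 p)
  | 1%nat => mk3 (v1 p) t (v3 p)
  | _ => mk3 (v1 p) (v2 p) t
  end.
Definition coord (i : nat) (p : vec3) : R :=
  match i with 0%nat => v1 p | 1%nat => v2 p | _ => v3 p end.
Definition pderiv (i : nat) (f : vec3 -> R) (p : vec3) : R :=
  Derive (fun t => f (line i p t)) (coord i p).

Lemma line_coord i p : line i p (coord i p) = p.
Proof. destruct p as [[a b] c]; destruct i as [|[|i]]; reflexivity. Qed.

Definition derivable_on_region (F : family) : Prop :=
  forall c q w p i, open_region c q p -> ex_derive (fun t => F c q w (line i p t)) (coord i p).

(* Differentiability is
   asked on the larger, open region, so that identities holding there can be
   differentiated. *)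
Fixpoint symbol (k : nat) (d m : R) (F : family) : Prop :=
  match k with
  | 0%nat => bounded F d m
  | S k => bounded F d m /\ derivable_on_region F /\
      forall i, symbol k (d - 1) (m - 1) (fun c q w => pderiv i (F c q w))
  end.

Definition fadd (F G : family) : family := fun c q w x => F c q w x + G c q w x.
Definition fmul (F G : family) : family := fun c q w x => F c q w x * G c q w x.
Definition finv (F : family) : family := fun c q w x => / F c q w x.
Definition fsqrt (F : family) : family := fun c q w x => sqrt (F c q w x).
Definition fconst (K : R -> vec3 -> vec3 -> R) : family := fun c q w _ => K c q w.
Definition fnum (r : R) : family := fun _ _ _ _ => r.

Lemma open_region_nhds c q p i :
  open_region c q p -> locally (coord i p) (fun t => open_region c q (line i p t)).
Proof.
  intros [Hc Hp]. pose proof (dot_self_pos c q p (conj Hc Hp)) as Hd.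
  assert (Hder : ex_derive (fun t => vnorm (line i p t)) (coord i p)).
  { destruct p as [[a b] e]; destruct i as [|[|i]];
      unfold vnorm, dot, line, coord, mk3, v1, v2, v3 in *; simpl in *; auto_derive; lra. }
  pose proof (ex_derive_continuous _ _ Hder) as Hcont.
  unfold continuous in Hcont; rewrite line_coord in Hcont.
  assert (He : 0 < vnorm p - en c q) by lra.
  generalize (proj1 (filterlim_locally _ _) Hcont (mkposreal _ He)).
  apply filter_imp; intros t Ht; split; auto.
  change (Rabs (vnorm (line i p t) - vnorm p) < vnorm p - en c q) in Ht.
  apply Rabs_def2 in Ht; lra.
Qed.

Lemma bounded_ext d m (F G : family) :
  (forall c q w p, open_region c q p -> F c q w p = G c q w p) -> bounded F d m -> bounded G d m.
Proof.
  intros HFG [C [n [HC HB]]]; exists C, n; split; auto; intros c q w p HR.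
  rewrite <- HFG; [apply HB|eapply region_open]; eauto.
Qed.

Lemma symbol_ext k : forall d m (F G : family),
  (forall c q w p, open_region c q p -> F c q w p = G c q w p) -> symbol k d m F -> symbol k d m G.
Proof.
  induction k as [|k IHk]; intros d m F G HFG HF; [eapply bounded_ext; eauto|].
  destruct HF as [Hb [Hx Hs]]; split; [eapply bounded_ext; eauto| split].
  - intros c q w p i Hu; eapply ex_derive_ext_loc; [|apply (Hx c q w p i Hu)].
    generalize (open_region_nhds c q p i Hu); apply filter_imp; auto.
  - intro i; refine (IHk _ _ _ _ _ (Hs i)); intros c q w p Hu; apply Derive_ext_loc.
    generalize (open_region_nhds c q p i Hu); apply filter_imp; auto.
Qed.

Lemma symbol_bounded k d m F : symbol k d m F -> bounded F d m.
Proof. destruct k; simpl; tauto. Qed.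

Lemma symbol_pred k : forall d m F, symbol (S k) d m F -> symbol k d m F.
Proof.
  induction k as [|k IHk]; intros d m F [Hb [Hx Hs]]; [exact Hb|].
  split; [exact Hb | split; [exact Hx|]]; intro i; apply IHk, Hs.
Qed.

Lemma symbol_eq_weights k d m d' m' F : d = d' -> m = m' -> symbol k d m F -> symbol k d' m' F.
Proof. intros; subst; auto. Qed.

Lemma bounded_eq_weights d m d' m' F : d = d' -> m = m' -> bounded F d m -> bounded F d' m'.
Proof. intros; subst; auto. Qed.

Lemma bounded_weaken d m d' m' F : d <= d' -> m <= m' -> bounded F d m -> bounded F d' m'.
Proof.
  intros Hd Hm [C [n [HC HB]]]; exists C, n; split; auto; intros c q w p HR.
  eapply Rle_trans; [apply HB; auto|]. pose proof (jap_ge1 q).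
  apply Rmult_le_compat_l; [apply Rmult_le_pos; auto; apply pow_le; lra|].
  apply weight_le; auto; apply HR.
Qed.

Lemma symbol_weaken k : forall d m d' m' F, d <= d' -> m <= m' -> symbol k d m F -> symbol k d' m' F.
Proof.
  induction k as [|k IHk]; intros d m d' m' F Hd Hm HF; [eapply bounded_weaken; eauto|].
  destruct HF as [Hb [Hx Hs]]; split; [eapply bounded_weaken; eauto| split; auto].
  intro i; eapply IHk; [| |apply Hs]; lra.
Qed.

Lemma bounded_add d m F G : bounded F d m -> bounded G d m -> bounded (fadd F G) d m.
Proof.
  intros [C1 [n1 [HC1 HB1]]] [C2 [n2 [HC2 HB2]]].
  exists (C1 + C2), (n1 + n2)%nat; split; [lra|]; intros c q w p HR.
  pose proof (HB1 c q w p HR); pose proof (HB2 c q w p HR).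
  pose proof (jap_pow_le q n1 (n1 + n2) ltac:(lia)); pose proof (jap_pow_le q n2 (n1 + n2) ltac:(lia)).
  pose proof (weight_pos c p d m).
  unfold fadd; eapply Rle_trans; [apply Rabs_triang|].
  assert (C1 * jap q ^ n1 <= C1 * jap q ^ (n1 + n2)) by (apply Rmult_le_compat_l; auto).
  assert (C2 * jap q ^ n2 <= C2 * jap q ^ (n1 + n2)) by (apply Rmult_le_compat_l; auto).
  nra.
Qed.

Lemma symbol_add k : forall d m F G, symbol k d m F -> symbol k d m G -> symbol k d m (fadd F G).
Proof.
  induction k as [|k IHk]; intros d m F G HF HG; [apply bounded_add; auto|].
  destruct HF as [Hb [Hx Hs]]; destruct HG as [Hb' [Hx' Hs']].
  split; [apply bounded_add; auto| split].
  - intros c q w p i Hu; apply (ex_derive_plus (fun t => F c q w (line i p t)) (fun t => G c q w (line i p t))); auto.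
  - intro i; apply (symbol_ext _ _ _ (fadd (fun c q w => pderiv i (F c q w)) (fun c q w => pderiv i (G c q w)))).
    + intros c q w p Hu; symmetry; apply Derive_plus; auto.
    + apply IHk; auto.
Qed.

Lemma bounded_mul d1 m1 d2 m2 F G :
  bounded F d1 m1 -> bounded G d2 m2 -> bounded (fmul F G) (d1 + d2) (m1 + m2).
Proof.
  intros [C1 [n1 [HC1 HB1]]] [C2 [n2 [HC2 HB2]]].
  exists (C1 * C2), (n1 + n2)%nat; split; [nra|]; intros c q w p HR.
  unfold fmul; rewrite Rabs_mult, weight_add, pow_add.
  replace (C1 * C2 * (jap q ^ n1 * jap q ^ n2) * (weight c p d1 m1 * weight c p d2 m2))
    with ((C1 * jap q ^ n1 * weight c p d1 m1) * (C2 * jap q ^ n2 * weight c p d2 m2)) by ring.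
  apply Rmult_le_compat; auto using Rabs_pos.
Qed.

Lemma symbol_mul k : forall d1 m1 d2 m2 F G,
  symbol k d1 m1 F -> symbol k d2 m2 G -> symbol k (d1 + d2) (m1 + m2) (fmul F G).
Proof.
  induction k as [|k IHk]; intros d1 m1 d2 m2 F G HF HG; [apply bounded_mul; auto|].
  pose proof (symbol_pred _ _ _ _ HF) as HF0; pose proof (symbol_pred _ _ _ _ HG) as HG0.
  destruct HF as [Hb [Hx Hs]]; destruct HG as [Hb' [Hx' Hs']].
  split; [apply bounded_mul; auto| split].
  - intros c q w p i Hu; apply (ex_derive_mult (fun t => F c q w (line i p t)) (fun t => G c q w (line i p t))); auto.
  - intro i.
    apply (symbol_ext _ _ _ (fadd (fmul (fun c q w => pderiv i (F c q w)) G) (fmul F (fun c q w => pderiv i (G c q w))))).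
    + intros c q w p Hu; unfold fadd, fmul, pderiv; rewrite Derive_mult, line_coord; auto.
    + apply symbol_add.
      * apply (symbol_eq_weights _ (d1 - 1 + d2) (m1 - 1 + m2)); try ring; apply IHk; auto.
      * apply (symbol_eq_weights _ (d1 + (d2 - 1)) (m1 + (m2 - 1))); try ring; apply IHk; auto.
Qed.

Lemma bounded_num r : bounded (fnum r) 0 0.
Proof.
  exists (Rabs r), 0%nat; split; [apply Rabs_pos|]; intros c q w p [Hc _].
  replace (weight c p 0 0) with 1 by weight_eq; unfold fnum; lra.
Qed.

Lemma bounded_zero d m : bounded (fnum 0) d m.
Proof.
  exists 0, 0%nat; split; [lra|]; intros c q w p _.
  unfold fnum; rewrite Rabs_R0; simpl; lra.
Qed.

Lemma symbol_const k : forall d m K, bounded (fconst K) d m -> symbol k d m (fconst K).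
Proof.
  induction k as [|k IHk]; intros d m K HK; auto.
  split; auto; split; [intros c q w p i _; exact (ex_derive_const (K c q w) _)|].
  intro i; apply (symbol_ext _ _ _ (fnum 0)).
  - intros; unfold fnum, fconst, pderiv; rewrite Derive_const; auto.
  - apply (IHk _ _ (fun _ _ _ => 0)), bounded_zero.
Qed.

Lemma symbol_num k r : symbol k 0 0 (fnum r).
Proof. apply symbol_const, bounded_num. Qed.

Lemma coord_le_vnorm x j : Rabs (coord j x) <= vnorm x.
Proof.
  unfold vnorm, dot; rewrite <- sqrt_Rsqr_abs; apply sqrt_le_1_alt; unfold Rsqr.
  destruct j as [|[|j]]; simpl; nra.
Qed.

Lemma symbol_coord k j : symbol k 1 1 (fun c q w x => coord j x).
Proof.
  assert (Hb : bounded (fun c q w x => coord j x) 1 1).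
  { exists 1, 0%nat; split; [lra|]; intros c q w p [Hc _].
    replace (weight c p 1 1) with (en c p) by weight_eq.
    pose proof (coord_le_vnorm p j); pose proof (vnorm_le_en c p Hc); lra. }
  destruct k; [exact Hb|]; split; [exact Hb|split].
  - intros c q w p i _; destruct i as [|[|i]]; destruct j as [|[|j]]; simpl; unfold v1, v2, v3, mk3; simpl;
      first [exact (ex_derive_const _ _) | exact (ex_derive_id _)].
  - intro i; replace (1 - 1) with 0 by ring.
    apply (symbol_ext _ _ _ (fnum (pderiv i (coord j) (mk3 0 0 0)))); [|apply symbol_num].
    intros c q w p _; unfold fnum, pderiv.
    destruct i as [|[|i]]; destruct j as [|[|j]]; simpl; unfold v1, v2, v3, mk3; simpl;
      rewrite ?Derive_id, ?Derive_const; reflexivity.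
Qed.

Lemma symbol_inv k : forall d m F, (forall c q w p, open_region c q p -> F c q w p <> 0) ->
  symbol k d m F -> bounded (finv F) (-d) (-m) -> symbol k (-d) (-m) (finv F).
Proof.
  induction k as [|k IHk]; intros d m F HF0 HF Hb; auto.
  pose proof (symbol_pred _ _ _ _ HF) as HFk.
  destruct HF as [HbF [Hx Hs]]; split; auto; split.
  - intros c q w p i Hu; apply (ex_derive_inv (fun t => F c q w (line i p t))); auto.
    rewrite line_coord; auto.
  - intro i.
    apply (symbol_ext _ _ _ (fmul (fmul (fnum (-1)) (fun c q w => pderiv i (F c q w))) (fmul (finv F) (finv F)))).
    + intros c q w p Hu; unfold fmul, fnum, finv, pderiv.
      assert (Hne : F c q w (line i p (coord i p)) <> 0) by (rewrite line_coord; auto).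
      rewrite (Derive_inv (fun t => F c q w (line i p t))), line_coord; auto; field; auto.
    + apply (symbol_eq_weights _ ((0 + (d - 1)) + (-d + -d)) ((0 + (m - 1)) + (-m + -m))); try ring.
      repeat apply symbol_mul; auto using symbol_num.
Qed.

Lemma bounded_sqrt d m F : bounded F d m -> bounded (fsqrt F) (d / 2) (m / 2).
Proof.
  intros [C [n [HC HB]]]; exists (sqrt C), n; split; [apply sqrt_pos|]; intros c q w p HR.
  pose proof (HB c q w p HR); pose proof (Rle_abs (F c q w p)).
  pose proof (weight_pos c p d m); pose proof (weight_pos c p (d / 2) (m / 2)).
  assert (HJ : 1 <= jap q ^ n) by (apply pow_R1_Rle, jap_ge1).
  assert (HsJ : sqrt (jap q ^ n) <= jap q ^ n).
  { rewrite <- (sqrt_square (jap q ^ n)) at 2 by lra. apply sqrt_le_1_alt; nra. }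
  unfold fsqrt; rewrite Rabs_pos_eq by apply sqrt_pos.
  eapply Rle_trans; [apply sqrt_le_1_alt; eapply Rle_trans; eassumption|].
  rewrite !sqrt_mult, weight_sqrt by nra.
  apply Rmult_le_compat_r; [lra|]; apply Rmult_le_compat_l; [apply sqrt_pos | exact HsJ].
Qed.

Lemma symbol_sqrt k : forall d m F, (forall c q w p, open_region c q p -> 0 < F c q w p) ->
  symbol k d m F -> bounded (finv F) (-d) (-m) -> symbol k (d / 2) (m / 2) (fsqrt F).
Proof.
  induction k as [|k IHk]; intros d m F HF0 HF Hb; [apply bounded_sqrt; auto|].
  pose proof (symbol_pred _ _ _ _ HF) as HFk.
  pose proof (symbol_inv _ _ _ _ (fun c q w p H => Rgt_not_eq _ _ (HF0 c q w p H)) HFk Hb) as HI.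
  destruct HF as [HbF [Hx Hs]]; split; [apply bounded_sqrt; auto| split].
  - intros c q w p i Hu; eexists; apply (is_derive_sqrt (fun t => F c q w (line i p t))).
    + apply Derive_correct; auto.
    + rewrite line_coord; auto.
  - intro i.
    apply (symbol_ext _ _ _ (fmul (fmul (fnum (/ 2)) (fun c q w => pderiv i (F c q w))) (fmul (finv F) (fsqrt F)))).
    + intros c q w p Hu; unfold fmul, fnum, finv, fsqrt, pderiv.
      assert (Hpos : 0 < F c q w (line i p (coord i p))) by (rewrite line_coord; auto).
      symmetry; etransitivity;
        [exact (is_derive_unique _ _ _ (is_derive_sqrt _ _ _ (Derive_correct _ _ (Hx c q w p i Hu)) Hpos))|].
      cbv beta; rewrite line_coord; pose proof (HF0 c q w p Hu).
      assert (Hsq : 0 < sqrt (F c q w p)) by (apply sqrt_lt_R0; auto).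
      rewrite <- (sqrt_sqrt (F c q w p)) at 2 by lra.
      revert Hsq; generalize (sqrt (F c q w p)); intros s Hsq.
      assert (E : forall D, D / (2 * s) = / 2 * D * (/ (s * s) * s)) by (intro; field; lra).
      apply E.
    + apply (symbol_eq_weights _ ((0 + (d - 1)) + (-d + d / 2)) ((0 + (m - 1)) + (-m + m / 2))); try field.
      repeat apply symbol_mul; auto using symbol_num.
Qed.

Lemma bounded_inv_sqrt d m F : bounded (finv F) d m -> bounded (finv (fsqrt F)) (d / 2) (m / 2).
Proof.
  intro Hb; apply (bounded_ext _ _ (fsqrt (finv F))); [intros; apply sqrt_inv|].
  apply bounded_sqrt, Hb.
Qed.

Lemma symbol_inv_sqrt k d m F : (forall c q w p, open_region c q p -> 0 < F c q w p) ->
  symbol k d m F -> bounded (finv F) (-d) (-m) -> symbol k (-(d / 2)) (-(m / 2)) (finv (fsqrt F)).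
Proof.
  intros HF0 HF Hb; apply symbol_inv.
  - intros; apply Rgt_not_eq, sqrt_lt_R0; auto.
  - apply symbol_sqrt; auto.
  - replace (- (d / 2)) with (- d / 2) by lra; replace (- (m / 2)) with (- m / 2) by lra.
    apply bounded_inv_sqrt, Hb.
Qed.

Lemma symbol_iter i j : forall k d m F, symbol (j + k) d m F ->
  symbol k (d - INR j) (m - INR j) (fun c q w => Nat.iter j (pderiv i) (F c q w)).
Proof.
  induction j as [|j IHj]; intros k d m F H.
  - apply (symbol_eq_weights _ d m); try (simpl; ring); exact H.
  - rewrite Nat.add_succ_l, <- Nat.add_succ_r in H.
    destruct (IHj (S k) d m F H) as [_ [_ H2]].
    apply (symbol_eq_weights _ (d - INR j - 1) (m - INR j - 1)); try (rewrite S_INR; ring).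
    exact (H2 i).
Qed.

Lemma symbol_dbeta b1 b2 b3 k d m F : symbol (b1 + b2 + b3 + k) d m F ->
  symbol k (d - INR (b1 + b2 + b3)) (m - INR (b1 + b2 + b3))
    (fun c q w => dbeta (b1, b2, b3) (F c q w)).
Proof.
  intro H; unfold dbeta; simpl; change d1 with (pderiv 0); change d2 with (pderiv 1); change d3 with (pderiv 2).
  rewrite !plus_INR.
  apply (symbol_eq_weights _ (d - INR b3 - INR b2 - INR b1) (m - INR b3 - INR b2 - INR b1)); try ring.
  apply (symbol_iter 0 b1 k _ _ (fun c q w => Nat.iter b2 (pderiv 1) (Nat.iter b3 (pderiv 2) (F c q w)))).
  apply (symbol_iter 1 b2 (b1 + k) _ _ (fun c q w => Nat.iter b3 (pderiv 2) (F c q w))).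
  apply (symbol_iter 2 b3 (b2 + (b1 + k))).
  replace (b3 + (b2 + (b1 + k)))%nat with (b1 + b2 + b3 + k)%nat by lia; auto.
Qed.

(** * Composition with the cutoff *)

Lemma weight_decay c p N : 1 <= c -> weight c p 0 (- INR N) = / (en c p / c) ^ N.
Proof.
  intro Hc; pose proof (en_div_ge1 c p Hc); unfold weight.
  rewrite Rpower_O, Rpower_Ropp, Rpower_pow by lra; ring.
Qed.

Section Cutoff.
Variable chi : R -> R.
Hypothesis Hchi : cutoff chi.

Lemma cutoff_deriv_vanish j x : 2 < x -> Derive_n chi j x = 0.
Proof.
  intro Hx; destruct Hchi as [_ [_ [_ H0]]].
  destruct j as [|j]; [apply H0; auto|].
  assert (Hl : locally x (fun t => chi t = 0)).
  { assert (He : 0 < x - 2) by lra; exists (mkposreal _ He); intros y Hy.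
    change (Rabs (y - x) < x - 2) in Hy; apply Rabs_def2 in Hy; apply H0; lra. }
  rewrite (Derive_n_ext_loc _ (fun _ => 0) (S j) x Hl); apply Derive_n_const.
Qed.

Lemma cutoff_deriv_bounded j : exists M, 0 <= M /\ forall x, 0 <= x -> Rabs (Derive_n chi j x) <= M.
Proof.
  destruct (continuity_ab_maj (fun x => Rabs (Derive_n chi j x)) 0 2) as [x0 [HM _]]; [lra| |].
  - intros x _; apply (continuity_pt_comp (Derive_n chi j) Rabs); [|apply Rcontinuity_abs].
    apply continuity_pt_filterlim; exact (ex_derive_continuous _ _ (proj1 Hchi (S j) x)).
  - exists (Rabs (Derive_n chi j x0)); split; [apply Rabs_pos|]; intros x Hx.
    destruct (Rle_lt_dec x 2); [apply HM; lra|].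
    rewrite cutoff_deriv_vanish, Rabs_R0 by auto; apply Rabs_pos.
Qed.

(* chi^(j)(phi) vanishes where phi > 2; a localizing phi confines p^0/c below a
   power of <q> elsewhere, so chi^(j)(phi) decays faster than any power of p^0/c. *)
Definition localizing (phi : family) : Prop :=
  (forall c q w p, region c q w p -> 0 <= phi c q w p) /\
  exists K n, 0 <= K /\
  forall c q w p, region c q w p -> phi c q w p <= 2 -> en c p / c <= K * jap q ^ n.

Lemma bounded_cutoff_deriv phi j N : localizing phi ->
  bounded (fun c q w x => Derive_n chi j (phi c q w x)) 0 (- INR N).
Proof.
  intros [Hpos [K [n [HK HKb]]]]; destruct (cutoff_deriv_bounded j) as [M [HM HMb]].
  exists (M * K ^ N), (n * N)%nat; split; [apply Rmult_le_pos; auto; apply pow_le; auto|].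
  intros c q w p HR; pose proof (jap_ge1 q); pose proof (weight_pos c p 0 (- INR N)).
  destruct (Rle_lt_dec (phi c q w p) 2) as [Hle|Hlt].
  - pose proof (HKb c q w p HR Hle); pose proof (Hpos c q w p HR); destruct HR as [Hc _].
    rewrite weight_decay by auto; pose proof (en_div_ge1 c p Hc).
    set (r := en c p / c) in *.
    assert (HrN : r ^ N <= K ^ N * jap q ^ (n * N)).
    { rewrite pow_mult, <- Rpow_mult_distr; apply pow_incr; lra. }
    assert (0 < r ^ N) by (apply pow_lt; lra).
    eapply Rle_trans; [apply HMb; auto|].
    replace (M * K ^ N * jap q ^ (n * N) * / r ^ N) with (M * ((K ^ N * jap q ^ (n * N)) / r ^ N))
      by (field; lra).
    rewrite <- (Rmult_1_r M) at 1; apply Rmult_le_compat_l; auto.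
    apply (Rmult_le_reg_r (r ^ N)); auto; field_simplify; lra.
  - rewrite cutoff_deriv_vanish, Rabs_R0 by auto.
    apply Rmult_le_pos; [|lra]; apply Rmult_le_pos; [apply Rmult_le_pos|]; auto; apply pow_le; lra.
Qed.

Lemma symbol_cutoff_deriv k : forall phi, localizing phi -> symbol k 0 1 phi ->
  forall j N, symbol k 0 (- INR N) (fun c q w x => Derive_n chi j (phi c q w x)).
Proof.
  induction k as [|k IHk]; intros phi Hloc Hphi j N; [apply bounded_cutoff_deriv; auto|].
  destruct Hphi as [Hb [Hx Hs]]; split; [apply bounded_cutoff_deriv; auto| split].
  - intros c q w p i Hu; apply (ex_derive_comp (Derive_n chi j) (fun t => phi c q w (line i p t))).
    + exact (proj1 Hchi (S j) _).
    + exact (Hx c q w p i Hu).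
  - intro i.
    apply (symbol_ext _ _ _ (fmul (fun c q w => pderiv i (phi c q w)) (fun c q w x => Derive_n chi (S j) (phi c q w x)))).
    + intros c q w p Hu; unfold fmul, pderiv; symmetry.
      rewrite (Derive_comp (Derive_n chi j) (fun t => phi c q w (line i p t))), line_coord; auto.
      exact (proj1 Hchi (S j) _).
    + apply (symbol_eq_weights _ ((0 - 1) + 0) ((1 - 1) + - INR (S N))); [ring | rewrite S_INR; ring|].
      apply symbol_mul; [apply Hs|]; apply IHk; auto; apply symbol_pred; split; auto.
Qed.

Lemma symbol_one_sub_cutoff k phi : localizing phi -> symbol k 0 1 phi ->
  symbol k 0 0 (fun c q w x => 1 - chi (phi c q w x)).
Proof.
  intros Hloc Hphi.
  apply (symbol_ext _ _ _ (fadd (fnum 1) (fmul (fnum (-1)) (fun c q w x => Derive_n chi 0 (phi c q w x))))).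
  { intros; unfold fadd, fmul, fnum; simpl; ring. }
  apply symbol_add; [apply symbol_num|].
  apply (symbol_eq_weights _ (0 + 0) (0 + - INR 0)); try (simpl; ring).
  apply symbol_mul; [apply symbol_num | apply symbol_cutoff_deriv; auto].
Qed.

End Cutoff.

(** * The collision quantities *)

Definition fcoord (j : nat) : family := fun _ _ _ x => coord j x.
Definition fq (j : nat) : family := fconst (fun _ q _ => coord j q).
Definition fw (j : nat) : family := fconst (fun _ _ w => coord j w).
Definition fen : family := fun c _ _ x => en c x.
Definition fen_q : family := fconst (fun c q _ => en c q).
Definition fvnorm : family := fun _ _ _ x => vnorm x.
Definition fgsq : family := fun c q _ x => gsq c x q.
Definition fs : family := fun c q _ x => s_inv c x q.
Definition fvphi : family := fun c q _ x => v_phi c x q.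

Lemma bounded_c_pow (n : nat) : bounded (fconst (fun c _ _ => c ^ n)) (INR n) 0.
Proof.
  exists 1, 0%nat; split; [lra|]; intros c q w p [Hc _]; unfold fconst.
  pose proof (en_div_ge1 c p Hc); unfold weight.
  rewrite Rpower_O, Rpower_pow, Rabs_pos_eq by (try apply pow_le; lra); lra.
Qed.

Lemma bounded_inv_c : bounded (fconst (fun c _ _ => / c)) (-1) 0.
Proof.
  exists 1, 0%nat; split; [lra|]; intros c q w p [Hc _]; unfold fconst.
  replace (weight c p (-1) 0) with (/ c) by weight_eq.
  rewrite Rabs_pos_eq by (left; apply Rinv_0_lt_compat; lra); lra.
Qed.

Lemma bounded_en_q : bounded fen_q 1 0.
Proof.
  exists 1, 1%nat; split; [lra|]; intros c q w p [Hc _]; unfold fen_q, fconst.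
  replace (weight c p 1 0) with c by weight_eq.
  pose proof (en_pos c q Hc); pose proof (en_le_jap c q Hc).
  rewrite Rabs_pos_eq by lra; lra.
Qed.

Lemma bounded_inv_en_q : bounded (fconst (fun c q _ => / en c q)) (-1) 0.
Proof.
  exists 1, 0%nat; split; [lra|]; intros c q w p [Hc _]; unfold fconst.
  replace (weight c p (-1) 0) with (/ c) by weight_eq.
  pose proof (en_pos c q Hc); pose proof (en_ge_c c q Hc).
  rewrite Rabs_pos_eq by (left; apply Rinv_0_lt_compat; lra).
  rewrite pow_O, !Rmult_1_l; apply Rinv_le_contravar; lra.
Qed.

Lemma bounded_q j : bounded (fq j) 1 0.
Proof.
  exists 1, 1%nat; split; [lra|]; intros c q w p [Hc _]; unfold fq, fconst.
  replace (weight c p 1 0) with c by weight_eq.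
  pose proof (coord_le_vnorm q j); pose proof (vnorm_le_en c q Hc); pose proof (en_le_jap c q Hc); lra.
Qed.

Lemma bounded_w j : bounded (fw j) 0 0.
Proof.
  exists 1, 0%nat; split; [lra|]; intros c q w p [Hc [_ Hw]]; unfold fw, fconst.
  replace (weight c p 0 0) with 1 by weight_eq.
  pose proof (coord_le_vnorm w j); lra.
Qed.

Lemma symbol_normsq k : symbol k 2 2 (fun _ _ _ x => dot x x).
Proof.
  apply (symbol_ext _ _ _ (fadd (fadd (fmul (fcoord 0) (fcoord 0)) (fmul (fcoord 1) (fcoord 1))) (fmul (fcoord 2) (fcoord 2)))).
  { intros; reflexivity. }
  replace 2 with (1 + 1) by ring; repeat apply symbol_add; apply symbol_mul; apply symbol_coord.
Qed.

Lemma symbol_en_sq k : symbol k 2 2 (fun c _ _ x => c ^ 2 + dot x x).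
Proof.
  apply (symbol_ext _ _ _ (fadd (fconst (fun c _ _ => c ^ 2)) (fun _ _ _ x => dot x x))); [intros; reflexivity|].
  apply symbol_add; [|apply symbol_normsq].
  apply symbol_const, (bounded_weaken (INR 2) 0); [simpl; lra | lra | apply bounded_c_pow].
Qed.

Lemma bounded_inv_en_sq : bounded (finv (fun c _ _ x => c ^ 2 + dot x x)) (-2) (-2).
Proof.
  exists 1, 0%nat; split; [lra|]; intros c q w p [Hc _].
  replace (weight c p (-2) (-2)) with (/ en c p ^ 2) by weight_eq.
  unfold finv; rewrite <- en_sq; pose proof (en_pos c p Hc).
  rewrite Rabs_pos_eq by (left; apply Rinv_0_lt_compat, pow_lt; lra); lra.
Qed.

Lemma symbol_en k : symbol k 1 1 fen.
Proof.
  apply (symbol_ext _ _ _ (fsqrt (fun c _ _ x => c ^ 2 + dot x x))); [intros; reflexivity|].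
  apply (symbol_eq_weights _ (2 / 2) (2 / 2)); try field.
  apply symbol_sqrt; [|apply symbol_en_sq | apply bounded_inv_en_sq].
  intros c q w p [Hc _]; pose proof (dot_self_ge0 p); nra.
Qed.

Lemma bounded_inv_en : bounded (finv fen) (-1) (-1).
Proof.
  exists 1, 0%nat; split; [lra|]; intros c q w p [Hc _].
  replace (weight c p (-1) (-1)) with (/ en c p) by weight_eq.
  unfold finv, fen; pose proof (en_pos c p Hc).
  rewrite Rabs_pos_eq by (left; apply Rinv_0_lt_compat; lra); lra.
Qed.

Lemma symbol_inv_en k : symbol k (-1) (-1) (finv fen).
Proof.
  apply symbol_inv; [|apply symbol_en | apply bounded_inv_en].
  intros c q w p [Hc _]; pose proof (en_pos c p Hc); unfold fen; lra.
Qed.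

Lemma bounded_inv_normsq : bounded (finv (fun _ _ _ x => dot x x)) (-2) (-2).
Proof.
  exists 4, 0%nat; split; [lra|]; intros c q w p [Hc [Hr _]].
  replace (weight c p (-2) (-2)) with (/ en c p ^ 2) by weight_eq.
  pose proof (en_le_2_vnorm c p q Hc Hr); pose proof (en_pos c p Hc).
  unfold finv; rewrite <- vnorm_sq.
  assert (0 < vnorm p ^ 2) by (apply pow_lt; lra).
  rewrite Rabs_pos_eq by (left; apply Rinv_0_lt_compat; lra).
  apply (Rmult_le_reg_r (vnorm p ^ 2 * en c p ^ 2)); [apply Rmult_lt_0_compat; auto; apply pow_lt; lra|].
  field_simplify; nra.
Qed.

Lemma symbol_vnorm k : symbol k 1 1 fvnorm.
Proof.
  apply (symbol_ext _ _ _ (fsqrt (fun _ _ _ x => dot x x))); [intros; reflexivity|].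
  apply (symbol_eq_weights _ (2 / 2) (2 / 2)); try field.
  apply symbol_sqrt; [|apply symbol_normsq | apply bounded_inv_normsq].
  intros c q w p Hu; apply (dot_self_pos c q p Hu).
Qed.

Lemma symbol_dot_q k : symbol k 2 1 (fun _ q _ x => dot x q).
Proof.
  apply (symbol_ext _ _ _ (fadd (fadd (fmul (fcoord 0) (fq 0)) (fmul (fcoord 1) (fq 1))) (fmul (fcoord 2) (fq 2)))).
  { intros; reflexivity. }
  apply (symbol_eq_weights _ (1 + 1) (1 + 0)); try ring.
  repeat apply symbol_add; (apply symbol_mul; [apply symbol_coord | apply symbol_const, bounded_q]).
Qed.

Lemma symbol_gsq k : symbol k 2 1 fgsq.
Proof.
  apply (symbol_ext _ _ _ (fadd (fadd (fmul (fnum 2) (fmul fen fen_q))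
    (fmul (fnum (-2)) (fun _ q _ x => dot x q))) (fmul (fnum (-2)) (fconst (fun c _ _ => c ^ 2))))).
  { intros; unfold fgsq, gsq, fadd, fmul, fnum, fen, fen_q, fconst; ring. }
  apply symbol_add; [apply symbol_add|];
    apply (symbol_eq_weights _ (0 + 2) (0 + 1)); try ring; apply symbol_mul; try apply symbol_num.
  - apply (symbol_eq_weights _ (1 + 1) (1 + 0)); try ring.
    apply symbol_mul; [apply symbol_en | apply symbol_const, bounded_en_q].
  - apply symbol_dot_q.
  - apply symbol_const, (bounded_weaken (INR 2) 0); [simpl; lra | lra | apply bounded_c_pow].
Qed.

Lemma bounded_inv_gsq : bounded (finv fgsq) (-2) (-1).
Proof.
  exists 54, 1%nat; split; [lra|]; intros c q w p HR.
  pose proof (gsq_pos c q p (region_open c q w p HR)); destruct HR as [Hc [Hr _]].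
  replace (weight c p (-2) (-1)) with (/ (c * en c p)) by weight_eq.
  unfold finv, fgsq; pose proof (gsq_lower_region c p q Hc Hr).
  pose proof (en_le_jap c q Hc); pose proof (en_pos c p Hc); pose proof (en_pos c q Hc).
  rewrite Rabs_pos_eq by (left; apply Rinv_0_lt_compat; lra).
  assert (H54 : c * en c p <= 54 * jap q * gsq c p q).
  { apply (Rmult_le_reg_l c); [lra|]; nra. }
  assert (0 < c * en c p) by nra.
  apply (Rmult_le_reg_l (c * en c p * gsq c p q)); [apply Rmult_lt_0_compat; lra|].
  replace (c * en c p * gsq c p q * / gsq c p q) with (c * en c p) by (field; lra).
  replace (c * en c p * gsq c p q * (54 * jap q ^ 1 * / (c * en c p)))
    with (54 * jap q * gsq c p q) by (field; lra).
  exact H54.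
Qed.

Lemma symbol_g k : symbol k 1 (1 / 2) (fsqrt fgsq).
Proof.
  apply (symbol_eq_weights _ (2 / 2) (1 / 2)); try field.
  apply symbol_sqrt; auto using symbol_gsq, bounded_inv_gsq.
  intros c q w p Hu; apply gsq_pos, Hu.
Qed.

Lemma symbol_s k : symbol k 2 1 fs.
Proof.
  apply (symbol_ext _ _ _ (fadd fgsq (fmul (fnum 4) (fconst (fun c _ _ => c ^ 2))))).
  { intros; unfold fs, fgsq, fadd, fmul, fnum, fconst; rewrite s_inv_gsq; ring. }
  apply symbol_add; [apply symbol_gsq|].
  apply (symbol_eq_weights _ (0 + 2) (0 + 1)); try ring; apply symbol_mul; [apply symbol_num|].
  apply symbol_const, (bounded_weaken (INR 2) 0); [simpl; lra | lra | apply bounded_c_pow].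
Qed.

Lemma s_pos c q p : open_region c q p -> 0 < s_inv c p q.
Proof.
  intro Hu; rewrite s_inv_gsq; pose proof (gsq_pos c q p Hu); destruct Hu as [Hc _]; nra.
Qed.

Lemma bounded_inv_s : bounded (finv fs) (-2) (-1).
Proof.
  destruct bounded_inv_gsq as [C [n [HC HB]]]; exists C, n; split; auto; intros c q w p HR.
  eapply Rle_trans; [|apply (HB c q w p HR)].
  pose proof (gsq_pos c q p (region_open c q w p HR)); destruct HR as [Hc _].
  unfold finv, fs, fgsq; rewrite s_inv_gsq.
  rewrite !Rabs_pos_eq by (left; apply Rinv_0_lt_compat; nra).
  apply Rinv_le_contravar; nra.
Qed.

Lemma symbol_sqrt_s k : symbol k 1 (1 / 2) (fsqrt fs).
Proof.
  apply (symbol_eq_weights _ (2 / 2) (1 / 2)); try field.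
  apply symbol_sqrt; auto using symbol_s, bounded_inv_s.
  intros c q w p Hu; apply s_pos, Hu.
Qed.

Lemma symbol_inv_sqrt_s k : symbol k (-1) (-(1 / 2)) (finv (fsqrt fs)).
Proof.
  apply (symbol_eq_weights _ (-(2 / 2)) (-(1 / 2))); try field.
  apply symbol_inv_sqrt; auto using symbol_s, bounded_inv_s.
  intros c q w p Hu; apply s_pos, Hu.
Qed.

Lemma symbol_vphi k : symbol k 1 0 fvphi.
Proof.
  apply (symbol_ext _ _ _ (fmul (fmul (fmul (fmul (fmul (fnum (/ 4)) (fconst (fun c _ _ => c ^ 1)))
    (fsqrt fgsq)) (fsqrt fs)) (finv fen)) (fconst (fun c q _ => / en c q)))).
  { intros c q w p [Hc _]; pose proof (en_pos c p Hc); pose proof (en_pos c q Hc).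
    unfold fvphi, v_phi, g_rel, fen_q, fmul, fnum, fconst, fsqrt, finv, fgsq, fs, fen, gsq.
    field; lra. }
  apply (symbol_eq_weights _ (0 + INR 1 + 1 + 1 + -1 + -1) (0 + 0 + 1 / 2 + 1 / 2 + -1 + 0));
    try (simpl; field).
  repeat apply symbol_mul; auto using symbol_num, symbol_g, symbol_sqrt_s, symbol_inv_en.
  - apply symbol_const, bounded_c_pow.
  - apply symbol_const, bounded_inv_en_q.
Qed.

Lemma bounded_inv_vphi : bounded (finv fvphi) (-1) 0.
Proof.
  apply (bounded_ext _ _ (fmul (fmul (fmul (fmul (fmul (fnum 4) (fconst (fun c _ _ => / c))) fen) fen_q)
    (finv (fsqrt fgsq))) (finv (fsqrt fs)))).
  { intros c q w p Hu; pose proof (gsq_pos c q p Hu); pose proof (s_pos c q p Hu); destruct Hu as [Hc _].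
    pose proof (en_pos c p Hc); pose proof (en_pos c q Hc).
    pose proof (sqrt_lt_R0 _ H); pose proof (sqrt_lt_R0 _ H0).
    unfold fvphi, v_phi, g_rel, fen_q, fmul, fnum, fconst, fsqrt, finv, fgsq, fs, fen, gsq in *.
    field; repeat split; lra. }
  apply (bounded_eq_weights (0 + -1 + 1 + 1 + -2 / 2 + -1) (0 + 0 + 1 + 0 + -1 / 2 + -(1 / 2))); try field.
  repeat apply bounded_mul.
  - apply bounded_num.
  - apply bounded_inv_c.
  - apply (symbol_bounded 0), symbol_en.
  - apply bounded_en_q.
  - apply bounded_inv_sqrt, bounded_inv_gsq.
  - apply (symbol_bounded 0), symbol_inv_sqrt_s.
Qed.

Lemma symbol_en_div_c k : symbol k 0 1 (fun c _ _ x => en c x / c).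
Proof.
  apply (symbol_ext _ _ _ (fmul (fconst (fun c _ _ => / c)) fen)).
  { intros; unfold fmul, fconst, fen, Rdiv; ring. }
  apply (symbol_eq_weights _ (-1 + 1) (0 + 1)); try ring.
  apply symbol_mul; [apply symbol_const, bounded_inv_c | apply symbol_en].
Qed.

Lemma symbol_vnorm_div_en_q k : symbol k 0 1 (fun c q _ x => 2 / 3 * vnorm x / en c q).
Proof.
  apply (symbol_ext _ _ _ (fmul (fmul (fnum (2 / 3)) fvnorm) (fconst (fun c q _ => / en c q)))).
  { intros; reflexivity. }
  apply (symbol_eq_weights _ (0 + 1 + -1) (0 + 1 + 0)); try ring.
  apply symbol_mul; [apply symbol_mul; [apply symbol_num | apply symbol_vnorm]|].
  apply symbol_const, bounded_inv_en_q.
Qed.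

Lemma localizing_en_div_c : localizing (fun c _ _ x => en c x / c).
Proof.
  split; [intros c q w p [Hc _]; pose proof (en_div_ge1 c p Hc); lra|].
  exists 2, 0%nat; split; [lra|]; intros; simpl; lra.
Qed.

Lemma localizing_vnorm_div_en_q : localizing (fun c q _ x => 2 / 3 * vnorm x / en c q).
Proof.
  split.
  - intros c q w p [Hc _]; pose proof (en_pos c q Hc); pose proof (vnorm_ge0 p).
    apply Rmult_le_pos; [lra | left; apply Rinv_0_lt_compat; lra].
  - exists 6, 1%nat; split; [lra|]; intros c q w p [Hc [Hr _]] Hle.
    pose proof (en_pos c q Hc); pose proof (en_le_jap c q Hc); pose proof (en_le_2_vnorm c p q Hc Hr).
    assert (vnorm p <= 3 * en c q).
    { apply (Rmult_le_reg_r (2 / 3 / en c q)); [apply Rdiv_lt_0_compat; lra|].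
      replace (3 * en c q * (2 / 3 / en c q)) with 2 by (field; lra).
      unfold Rdiv in *; lra. }
    apply (Rmult_le_reg_r c); [lra|]; unfold Rdiv; rewrite Rmult_assoc, Rinv_l, pow_1; lra.
Qed.

Lemma symbol_vphi_chi_Ac chi k : cutoff chi ->
  symbol k 1 0 (fun c q _ x => v_phi c x q * chi_Ac chi c x q).
Proof.
  intro Hchi.
  apply (symbol_eq_weights _ (1 + (0 + 0)) (0 + (0 + 0))); try ring.
  apply (symbol_mul _ _ _ _ _ fvphi); [apply symbol_vphi|].
  apply symbol_mul; apply symbol_one_sub_cutoff; auto using symbol_en_div_c, symbol_vnorm_div_en_q,
    localizing_en_div_c, localizing_vnorm_div_en_q.
Qed.

Definition fpq (j : nat) : family := fadd (fcoord j) (fq j).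
Definition fdot_w : family := fun _ q w x => dot (vadd x q) w.
Definition fnormsq_pq : family := fun _ q _ x => dot (vadd x q) (vadd x q).

Lemma coord_vadd j a b : coord j (vadd a b) = coord j a + coord j b.
Proof. destruct j as [|[|j]]; reflexivity. Qed.

Lemma coord_vscal j r a : coord j (vscal r a) = r * coord j a.
Proof. destruct j as [|[|j]]; reflexivity. Qed.

Lemma symbol_pq k j : symbol k 1 1 (fpq j).
Proof.
  apply symbol_add; [apply symbol_coord|].
  apply symbol_const, (bounded_weaken 1 0); [lra | lra | apply bounded_q].
Qed.

Lemma symbol_dot_w k : symbol k 1 1 fdot_w.
Proof.
  apply (symbol_ext _ _ _ (fadd (fadd (fmul (fpq 0) (fw 0)) (fmul (fpq 1) (fw 1))) (fmul (fpq 2) (fw 2)))).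
  { intros; unfold fdot_w; change (dot (vadd p q) w) with
      (coord 0 (vadd p q) * coord 0 w + coord 1 (vadd p q) * coord 1 w + coord 2 (vadd p q) * coord 2 w).
    rewrite !coord_vadd; reflexivity. }
  apply (symbol_eq_weights _ (1 + 0) (1 + 0)); try ring.
  repeat apply symbol_add; (apply symbol_mul; [apply symbol_pq | apply symbol_const, bounded_w]).
Qed.

Lemma symbol_normsq_pq k : symbol k 2 2 fnormsq_pq.
Proof.
  apply (symbol_ext _ _ _ (fadd (fadd (fmul (fpq 0) (fpq 0)) (fmul (fpq 1) (fpq 1))) (fmul (fpq 2) (fpq 2)))).
  { intros; unfold fnormsq_pq; change (dot (vadd p q) (vadd p q)) with
      (coord 0 (vadd p q) * coord 0 (vadd p q) + coord 1 (vadd p q) * coord 1 (vadd p q)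
       + coord 2 (vadd p q) * coord 2 (vadd p q)).
    rewrite !coord_vadd; reflexivity. }
  apply (symbol_eq_weights _ (1 + 1) (1 + 1)); try ring.
  repeat apply symbol_add; (apply symbol_mul; apply symbol_pq).
Qed.

Lemma bounded_inv_normsq_pq : bounded (finv fnormsq_pq) (-2) (-2).
Proof.
  exists 36, 0%nat; split; [lra|]; intros c q w p HR.
  pose proof (dot_vadd_pos c q p (region_open c q w p HR)); destruct HR as [Hc [Hr _]].
  replace (weight c p (-2) (-2)) with (/ en c p ^ 2) by weight_eq.
  unfold finv, fnormsq_pq; pose proof (en_sq_le_vadd c p q Hc Hr); pose proof (en_pos c p Hc).
  assert (0 < en c p ^ 2) by (apply pow_lt; lra).
  rewrite Rabs_pos_eq by (left; apply Rinv_0_lt_compat; lra).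
  replace (36 * jap q ^ 0 * / en c p ^ 2) with (/ (en c p ^ 2 / 36)) by (simpl; field; lra).
  apply Rinv_le_contravar; lra.
Qed.

Lemma symbol_inv_normsq_pq k : symbol k (-2) (-2) (finv fnormsq_pq).
Proof.
  apply symbol_inv; [|apply symbol_normsq_pq | apply bounded_inv_normsq_pq].
  intros c q w p Hu; apply Rgt_not_eq, (dot_vadd_pos c q p Hu).
Qed.

Definition fgamma : family :=
  fadd (fmul (fmul (fsqrt fgsq) (fadd fen fen_q)) (finv (fsqrt fs))) (fmul (fnum (-1)) (fsqrt fgsq)).

Lemma symbol_gamma k : symbol k 1 1 fgamma.
Proof.
  apply symbol_add.
  - apply (symbol_eq_weights _ (1 + 1 + -1) (1 / 2 + 1 + - (1 / 2))); try field.
    apply symbol_mul; [apply symbol_mul|]; auto using symbol_g, symbol_inv_sqrt_s.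
    apply symbol_add; [apply symbol_en|].
    apply symbol_const, (bounded_weaken 1 0); [lra | lra | apply bounded_en_q].
  - apply (symbol_weaken _ (0 + 1) (0 + 1 / 2)); try lra.
    apply symbol_mul; [apply symbol_num | apply symbol_g].
Qed.

(* The j-th coordinate of p' (sg = 1) or q' (sg = -1), with [fgamma] = g (gamma0 - 1). *)
Definition fpost (sg : R) (j : nat) : family :=
  fadd (fadd (fmul (fnum (/ 2)) (fpq j)) (fmul (fmul (fnum (sg / 2)) (fsqrt fgsq)) (fw j)))
       (fmul (fmul (fmul (fmul (fnum (sg / 2)) fgamma) fdot_w) (finv fnormsq_pq)) (fpq j)).

Lemma symbol_post k sg j : symbol k 1 1 (fpost sg j).
Proof.
  apply symbol_add; [apply symbol_add|].
  - apply (symbol_eq_weights _ (0 + 1) (0 + 1)); try ring.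
    apply symbol_mul; [apply symbol_num | apply symbol_pq].
  - apply (symbol_weaken _ (0 + 1 + 0) (0 + 1 / 2 + 0)); try lra.
    apply symbol_mul; [apply symbol_mul; [apply symbol_num | apply symbol_g] | apply symbol_const, bounded_w].
  - apply (symbol_eq_weights _ (0 + 1 + 1 + -2 + 1) (0 + 1 + 1 + -2 + 1)); try ring.
    repeat apply symbol_mul; auto using symbol_num, symbol_gamma, symbol_dot_w, symbol_inv_normsq_pq, symbol_pq.
Qed.

Lemma coord_post c q w p j : open_region c q p ->
  coord j (p_post c p q w) = fpost 1 j c q w p /\ coord j (q_post c p q w) = fpost (-1) j c q w p.
Proof.
  intro Hu; pose proof (dot_vadd_pos c q p Hu); pose proof (s_pos c q p Hu).
  pose proof (sqrt_lt_R0 _ H0).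
  unfold p_post, q_post, post_dir; rewrite vnorm_sq.
  repeat rewrite ?coord_vadd, ?coord_vscal.
  unfold fpost, fgamma, fpq, fcoord, fq, fw, fen_q, fdot_w, fnormsq_pq, fgsq, fs, fen.
  unfold fadd, fmul, finv, fsqrt, fnum, fconst, gamma0, g_rel, gsq.
  split; field; lra.
Qed.

Definition poly_bounded (f : family) : Prop :=
  exists C n, 0 <= C /\ forall c q w p, region c q w p -> f c q w p <= C * jap q ^ n.

Lemma poly_bounded_add f g : poly_bounded f -> poly_bounded g -> poly_bounded (fadd f g).
Proof.
  intros [C1 [n1 [HC1 HB1]]] [C2 [n2 [HC2 HB2]]].
  exists (C1 + C2), (n1 + n2)%nat; split; [lra|]; intros c q w p HR.
  pose proof (HB1 c q w p HR); pose proof (HB2 c q w p HR).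
  pose proof (jap_pow_le q n1 (n1 + n2) ltac:(lia)); pose proof (jap_pow_le q n2 (n1 + n2) ltac:(lia)).
  assert (C1 * jap q ^ n1 <= C1 * jap q ^ (n1 + n2)) by (apply Rmult_le_compat_l; auto).
  assert (C2 * jap q ^ n2 <= C2 * jap q ^ (n1 + n2)) by (apply Rmult_le_compat_l; auto).
  unfold fadd; lra.
Qed.

Lemma bounded_poly_bounded d m F : d <= 0 -> m <= 0 -> bounded F d m ->
  poly_bounded (fun c q w p => Rabs (F c q w p)).
Proof.
  intros Hd Hm [C [n [HC HB]]]; exists C, n; split; auto; intros c q w p HR.
  eapply Rle_trans; [apply HB; auto|]; destruct HR as [Hc _].
  rewrite <- (Rmult_1_r (C * jap q ^ n)) at 2.
  apply Rmult_le_compat_l; [apply Rmult_le_pos; auto; apply pow_le; pose proof (jap_ge1 q); lra|].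
  replace 1 with (weight c p 0 0) by weight_eq; apply weight_le; auto.
Qed.

Lemma poly_bounded_dbeta b1 b2 b3 d m F : symbol (b1 + b2 + b3) d m F ->
  d <= INR (b1 + b2 + b3) -> m <= INR (b1 + b2 + b3) ->
  poly_bounded (fun c q w p => Rabs (dbeta (b1, b2, b3) (F c q w) p)).
Proof.
  intros HF Hd Hm; rewrite <- (Nat.add_0_r (b1 + b2 + b3)) in HF.
  apply (bounded_poly_bounded (d - INR (b1 + b2 + b3)) (m - INR (b1 + b2 + b3))); try lra.
  exact (symbol_dbeta _ _ _ 0 _ _ _ HF).
Qed.

Lemma poly_bounded_dbeta_vec b1 b2 b3 (G : R -> vec3 -> vec3 -> vec3 -> vec3) :
  (1 <= b1 + b2 + b3)%nat -> (forall k j, symbol k 1 1 (fun c q w x => coord j (G c q w x))) ->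
  poly_bounded (fun c q w p => vnorm (dbeta_vec (b1, b2, b3) (G c q w) p)).
Proof.
  intros Hb HG.
  assert (HR : 1 <= INR (b1 + b2 + b3)) by (apply (le_INR 1); auto).
  destruct (poly_bounded_add _ _ (poly_bounded_add _ _
    (poly_bounded_dbeta b1 b2 b3 1 1 _ (HG _ 0%nat) HR HR)
    (poly_bounded_dbeta b1 b2 b3 1 1 _ (HG _ 1%nat) HR HR))
    (poly_bounded_dbeta b1 b2 b3 1 1 _ (HG _ 2%nat) HR HR)) as [C [n [HC HB]]].
  exists C, n; split; auto; intros c q w p HR'.
  eapply Rle_trans; [apply vnorm_mk3_le | exact (HB c q w p HR')].
Qed.

Lemma poly_bounded_dbeta_vphi_chi chi b1 b2 b3 : cutoff chi -> (1 <= b1 + b2 + b3)%nat ->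
  poly_bounded (fun c q w p =>
    Rabs (dbeta (b1, b2, b3) (fun x => v_phi c x q * chi_Ac chi c x q) p) / Rabs (v_phi c p q)).
Proof.
  intros Hchi Hb.
  assert (HR : 1 <= INR (b1 + b2 + b3)) by (apply (le_INR 1); auto).
  pose proof (symbol_dbeta b1 b2 b3 0 _ _ _ (symbol_vphi_chi_Ac chi (b1 + b2 + b3 + 0) Hchi)) as Hd.
  pose proof (bounded_mul _ _ _ _ _ _ (symbol_bounded _ _ _ _ Hd) bounded_inv_vphi) as Hq.
  apply bounded_poly_bounded in Hq as [C [n [HC HB]]]; [|lra|lra].
  exists C, n; split; auto; intros c q w p HR'.
  specialize (HB c q w p HR'); unfold fmul, finv, fvphi in HB.
  rewrite Rabs_mult, Rabs_inv in HB; exact HB.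
Qed.

Lemma symbol_p_post k j : symbol k 1 1 (fun c q w x => coord j (p_post c x q w)).
Proof. apply (symbol_ext _ _ _ (fpost 1 j)); [intros; symmetry; apply coord_post; auto | apply symbol_post]. Qed.

Lemma symbol_q_post k j : symbol k 1 1 (fun c q w x => coord j (q_post c x q w)).
Proof. apply (symbol_ext _ _ _ (fpost (-1) j)); [intros; symmetry; apply coord_post; auto | apply symbol_post]. Qed.

Lemma poly_bounded_exists f : poly_bounded f ->
  exists n : nat, (1 <= n)%nat /\ exists C : R, 0 < C /\
  forall (c : R) (p q w : vec3), 1 <= c -> 3 / 2 * en c q <= vnorm p -> vnorm w = 1 ->
  f c q w p <= C * jap q ^ n.
Proof.
  intros [C [n [HC HB]]]; exists (S n); split; [lia|]; exists (C + 1); split; [lra|].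
  intros c p q w Hc Hr Hw; pose proof (HB c q w p (conj Hc (conj Hr Hw))).
  pose proof (jap_pow_le q n (S n) ltac:(lia)); pose proof (jap_ge1 q).
  assert (0 <= jap q ^ n) by (apply pow_le; lra).
  assert (C * jap q ^ n <= (C + 1) * jap q ^ S n) by (apply Rmult_le_compat; lra).
  lra.
Qed.

Theorem lemmaA3 (chi : R -> R) (Hchi : cutoff chi) :
  forall beta : multi_index, beta <> (0%nat, 0%nat, 0%nat) ->
  exists n : nat, (1 <= n)%nat /\
  exists C : R, 0 < C /\
  forall (c : R) (p q w : vec3),
    1 <= c -> 3 / 2 * en c q <= vnorm p -> vnorm w = 1 ->
    Rabs (dbeta beta (fun x => v_phi c x q * chi_Ac chi c x q) p) / Rabs (v_phi c p q)
    + vnorm (dbeta_vec beta (fun x => p_post c x q w) p)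
    + vnorm (dbeta_vec beta (fun x => q_post c x q w) p)
    <= C * jap q ^ n.
Proof.
  intros [[b1 b2] b3] Hbeta.
  assert (Hb : (1 <= b1 + b2 + b3)%nat).
  { destruct b1, b2, b3; simpl; try lia; congruence. }
  exact (poly_bounded_exists _ (poly_bounded_add _ _ (poly_bounded_add _ _
    (poly_bounded_dbeta_vphi_chi chi b1 b2 b3 Hchi Hb)
    (poly_bounded_dbeta_vec b1 b2 b3 (fun c q w x => p_post c x q w) Hb symbol_p_post))
    (poly_bounded_dbeta_vec b1 b2 b3 (fun c q w x => q_post c x q w) Hb symbol_q_post))).
Qed.
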